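(* The monoid variety $\mathbf A_0^1\vee\mathbb M_\lambda(ata^+)$ satisfies an identity $\mathbf u\approx\mathbf v$ if and only if all of the following hold: (a) $\mathrm{simp}(\mathbf u)=\mathrm{simp}(\mathbf v)$ and $\mathrm{mul}(\mathbf u)=\mathrm{mul}(\mathbf v)$; (b) for all letters $x,y$ occurring in $\mathbf u$, the first occurrence of $x$ precedes the last occurrence of $y$ in $\mathbf u$ if and only if the first occurrence of $x$ precedes the last occurrence of $y$ in $\mathbf v$; (c) for every $t\in\mathrm{simp}(\mathbf u)$ and $x\in\mathrm{mul}(\mathbf u)$, the occurrence of $t$ precedes the first occurrence of $x$ in $\mathbf u$ iff it does so in $\mathbf v$, and the occurrence of $t$ precedes the second occurrence of $x$ in $\mathbf u$ iff it does so in $\mathbf v$.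
   Context: Words are elements of the free monoid $\mathfrak A^*$ over a countably infinite alphabet; $\mathrm{simp}(\mathbf w)$ and $\mathrm{mul}(\mathbf w)$ are the sets of letters occurring exactly once, respectively at least twice, in $\mathbf w$. $A_0=\langle e,f\mid e^2=e,\ f^2=f,\ fe=0\rangle=\{e,f,ef,0\}$, $A_0^1$ is $A_0$ with an identity adjoined, and $\mathbf A_0^1$ is the monoid variety it generates. Let $\tau_1$ be the congruence on $\mathfrak A^*$ generated by $a=aa$ for letters $a$; $\mathbf u\,\lambda\,\mathbf v$ iff $\mathbf u\,\tau_1\,\mathbf v$, $\mathrm{mul}(\mathbf u)=\mathrm{mul}(\mathbf v)$, and for each multiple letter its first two occurrences are adjacent in $\mathbf u$ iff adjacent in $\mathbf v$. For $\lambda$-classes, $\mathtt v\le\mathtt u$ iff $\mathtt u=\mathtt p\mathtt v\mathtt s$ in $\mathfrak A^*/\lambda$; for a set $\mathtt W$ of classes, $M_\lambda(\mathtt W)$ is the Rees quotient of $\mathfrak A^*/\lambda$ by the ideal of classes not $\le$ any element of $\mathtt W$, and $\mathbb M_\lambda(\mathtt W)$ the variety it generates. $ata^+$ denotes the $\lambda$-class $\{ata^k:k\ge1\}$. $\vee$ is the join of varieties. *)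

From mathcomp Require Import all_boot.
Set Implicit Arguments. Unset Strict Implicit. Unset Printing Implicit Defensive.

Notation word := (seq nat).

Definition simple_in (x : nat) (w : word) : bool := count_mem x w == 1.
Definition mult_in (x : nat) (w : word) : bool := 1 < count_mem x w.

Definition first_occ (x : nat) (w : word) : nat := index x w.
Definition second_occ (x : nat) (w : word) : nat :=
  (index x w).+1 + index x (drop (index x w).+1 w).
Definition last_occ (x : nat) (w : word) : nat := (size w).-1 - index x (rev w).

(* ---------- monoids presented as setoids (to allow quotients) ---------- *)
Record smonoid := SMonoid {
  carrier :> Type;
  meqv : carrier -> carrier -> Prop;
  mop : carrier -> carrier -> carrier;
  mone : carrier }.

Definition evalw (M : smonoid) (th : nat -> M) (w : word) : M :=
  foldr (fun x acc => mop (th x) acc) (mone M) w.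

Definition satisfies (M : smonoid) (u v : word) : Prop :=
  forall th : nat -> M, meqv (evalw th u) (evalw th v).

(* The join V(M1) \/ V(M2) of the varieties generated by M1, M2: its
   equational theory is the intersection of the theories of M1 and M2. *)
Definition join_satisfies (M1 M2 : smonoid) (u v : word) : Prop :=
  satisfies M1 u v /\ satisfies M2 u v.

(* ---------- A_0^1 = {1, e, f, ef, 0} with e^2=e, f^2=f, fe=0 ---------- *)
Inductive A01 := A1 | Ae | Af | Aef | A0.

Definition A01_mul (x y : A01) : A01 :=
  match x, y with
  | A1, z => z
  | z, A1 => z
  | A0, _ => A0
  | _, A0 => A0
  | Ae, Ae => Ae
  | Ae, Af => Aef
  | Ae, Aef => Aef
  | Af, Ae => A0
  | Af, Af => Af
  | Af, Aef => A0
  | Aef, Ae => A0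
  | Aef, Af => Aef
  | Aef, Aef => A0
  end.

Definition A0_1 : smonoid := @SMonoid A01 eq A01_mul A1.

Inductive tau1 : word -> word -> Prop :=
| tau1_refl w : tau1 w w
| tau1_sym u v : tau1 u v -> tau1 v u
| tau1_trans u v w : tau1 u v -> tau1 v w -> tau1 u w
| tau1_step p a s : tau1 (p ++ a :: s) (p ++ a :: a :: s).

Definition first_two_adj (x : nat) (w : word) : bool :=
  nth x.+1 w (index x w).+1 == x.

Definition lam (u v : word) : Prop :=
  [/\ tau1 u v,
      (forall x, mult_in x u = mult_in x v) &
      (forall x, mult_in x u -> first_two_adj x u = first_two_adj x v)].

Definition lam_le (v u : word) : Prop := exists p s, lam (p ++ v ++ s) u.

(* Rees quotient of A^*/lambda by the ideal of classes not <= any element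
   of W (W given by representatives).  Elements: Some w (the class of w)
   and None (zero); classes in the ideal are identified with zero. *)
Definition in_ideal (W : word -> Prop) (w : word) : Prop :=
  ~ exists r, W r /\ lam_le w r.

Definition Mlam_eqv (W : word -> Prop) (x y : option word) : Prop :=
  let z o := match o with None => True | Some w => in_ideal W w end in
  (z x /\ z y) \/
  (exists a b, x = Some a /\ y = Some b /\ ~ in_ideal W a /\ lam a b).

Definition Mlam_mul (x y : option word) : option word :=
  match x, y with Some a, Some b => Some (a ++ b) | _, _ => None end.

Definition M_lambda (W : word -> Prop) : smonoid :=
  @SMonoid (option word) (Mlam_eqv W) Mlam_mul (Some [::]).

(* the lambda-class a t a^+ with a = letter 0, t = letter 1 *)
Definition W_ata : word -> Prop := fun r => r = [:: 0; 1; 0].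

(* In A_0^1 a product of nonzero elements vanishes exactly when a factor containing f
   precedes a factor containing e.  Sending x to f and y to e thus detects whether some
   occurrence of x precedes some occurrence of y, and these relations together with the
   content determine every evaluation: this is (a) and (b).
   In M_lambda(ata^+), with a = 0 and t = 1, the nonzero classes are those of a^n, t a^n
   and a t a^n, and such a class is determined by the number of t's, the number of a's
   truncated at 2 and the number of a's before t.  Sending t to t, x to a and erasing
   the other letters reads off (c).  Conversely, under any substitution these invariants
   only depend on the multiplicities of the letters truncated at 2 and, for the letter
   whose image carries t, on how often (truncated at 2) each letter occurs before it,
   which (a)-(c) determine. *)

From mathcomp Require Import all_boot zify.
Set Implicit Arguments. Unset Strict Implicit. Unset Printing Implicit Defensive.

Lemma count_mem_gt0 (x : nat) (w : word) : (0 < count_mem x w) = (x \in w).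
Proof. by rewrite -has_pred1 has_count. Qed.

Lemma simple_inE x w : simple_in x w = (x \in w) && ~~ mult_in x w.
Proof.
by rewrite /simple_in /mult_in -count_mem_gt0; case: (count_mem x w) => [|[|n]].
Qed.

Lemma simple_in_mem x w : simple_in x w -> x \in w.
Proof. by rewrite simple_inE => /andP[]. Qed.

Lemma take_index_cat (t : nat) (w : word) :
  t \in w -> w = take (index t w) w ++ t :: drop (index t w).+1 w.
Proof. by move=> tw; rewrite -drop_index // cat_take_drop. Qed.

Lemma count_before_index (t : nat) (w : word) : count_mem t (take (index t w) w) = 0.
Proof. by elim: w => //= a w IHw; case: eqVneq => //= /negbTE ->. Qed.

Lemma count_before_eq0 (t y : nat) (w : word) : t \in w -> y != t ->
  (count_mem y (take (index t w) w) == 0) = (first_occ t w < first_occ y w).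
Proof.
rewrite /first_occ; elim: w => [|a w IHw] //= tw ynt.
have [->|ant] := eqVneq a t; first by rewrite eqxx eq_sym (negbTE ynt).
move: tw; rewrite in_cons eq_sym (negbTE ant) /= => tw.
by case: (eqVneq a y) => //= _; rewrite IHw.
Qed.

Lemma count_before_le1 (t y : nat) (w : word) : t \in w -> y != t ->
  (count_mem y (take (index t w) w) <= 1) = (first_occ t w < second_occ y w).
Proof.
rewrite /second_occ /first_occ; elim: w => [|a w IHw] //= tw ynt.
have [->|ant] := eqVneq a t; first by rewrite take0 addSn.
move: tw; rewrite in_cons eq_sym (negbTE ant) /= => tw.
case: (a == y) => /=; last by rewrite IHw.
by rewrite drop0 add1n !ltnS leqn0 count_before_eq0.
Qed.

Lemma last_occ_cons (y a : nat) (w : word) :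
  last_occ y (a :: w) = if y \in w then (last_occ y w).+1 else 0.
Proof.
rewrite /last_occ rev_cons -cats1 index_cat mem_rev /= size_rev.
case: ifP => yw; last by rewrite subnDA subnn.
have := index_mem y (rev w); rewrite mem_rev yw size_rev.
by case: (size w) => [|n] // lt_n; rewrite subSn.
Qed.

Lemma last_occ_simple (t : nat) (w : word) : simple_in t w -> last_occ t w = first_occ t w.
Proof.
rewrite /simple_in /first_occ; elim: w => [|a w IHw] //=.
rewrite last_occ_cons -count_mem_gt0.
case: (a == t) => /= count_t; first by move: count_t; rewrite add1n eqSS => /eqP ->.
by rewrite add0n in count_t; rewrite IHw // (eqP count_t).
Qed.

Fixpoint precedes (x y : nat) (w : word) : bool :=
  if w is a :: w' then ((a == x) && (y \in w')) || precedes x y w' else false.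

Lemma precedes_mem x y w : precedes x y w -> (x \in w) && (y \in w).
Proof.
elim: w => //= a w IHw /orP[/andP[/eqP-> yw]|/IHw/andP[xw yw]].
  by rewrite !in_cons eqxx yw orbT.
by rewrite !in_cons xw yw !orbT.
Qed.

Lemma precedesE x y w : precedes x y w = (first_occ x w < last_occ y w).
Proof.
rewrite /first_occ; elim: w => [|a w IHw] //=; rewrite last_occ_cons.
case yw: (y \in w); first by rewrite andbT IHw; case: (a == x).
rewrite andbF ltn0; apply/negbTE/negP => /precedes_mem.
by rewrite yw andbF.
Qed.

Lemma precedes_xx x w : precedes x x w = mult_in x w.
Proof.
rewrite /mult_in; elim: w => [|a w IHw] //=; rewrite IHw -count_mem_gt0.
by case: (a == x); case: (count_mem x w) => [|[|n]].
Qed.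

Definition is_zero (a : A01) : bool := if a is A0 then true else false.
Definition has_e (a : A01) : bool := match a with Ae | Aef => true | _ => false end.
Definition has_f (a : A01) : bool := match a with Af | Aef => true | _ => false end.

Definition A01_of (e f : bool) : A01 :=
  match e, f with
  | false, false => A1 | true, false => Ae | false, true => Af | true, true => Aef
  end.

Fixpoint A01_vanishes (th : nat -> A01) (w : word) : bool :=
  if w is a :: w' then
    [|| is_zero (th a), has_f (th a) && has (has_e \o th) w' | A01_vanishes th w']
  else false.

Lemma evalw_A01 (th : nat -> A01) (w : word) :
  evalw (M := A0_1) th w =
  if A01_vanishes th w then A0 else A01_of (has (has_e \o th) w) (has (has_f \o th) w).
Proof.
elim: w => [|a w IHw] //=; rewrite IHw.
by case: (th a); case: (A01_vanishes th w); case: (has _ w); case: (has _ w).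
Qed.

Lemma A01_vanishesP (th : nat -> A01) (w : word) :
  A01_vanishes th w <->
  has (is_zero \o th) w \/ exists x y, [/\ has_f (th x), has_e (th y) & precedes x y w].
Proof.
elim: w => [|a w IHw] /=; first by split=> // -[|[x [y []]]].
split.
- case/or3P=> [zero_a|/andP[fa /hasP[y yw ey]]|/IHw[zero_w|[x [y [fx ey xy]]]]].
  + by left; rewrite zero_a.
  + by right; exists a, y; rewrite eqxx yw.
  + by left; rewrite zero_w orbT.
  + by right; exists x, y; rewrite xy orbT.
- case=> [/orP[zero_a|zero_w]|[x [y [fx ey /orP[/andP[/eqP ax yw]|xy]]]]].
  + by rewrite zero_a.
  + by apply/or3P/Or33/IHw; left.
  + by apply/or3P/Or32; rewrite ax fx; apply/hasP; exists y.
  + by apply/or3P/Or33/IHw; right; exists x, y.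
Qed.

Definition A01_pair (x y : nat) (z : nat) : A01 :=
  if z == x then (if x == y then Aef else Af) else if z == y then Ae else A1.

Lemma evalw_A01_pair x y w :
  evalw (M := A0_1) (A01_pair x y) w =
  if precedes x y w then A0 else A01_of (y \in w) (x \in w).
Proof.
rewrite evalw_A01.
have e_pair z : has_e (A01_pair x y z) = (z == y).
  by rewrite /A01_pair; case: (eqVneq z x) => [->|_]; [case: (x == y)|case: (z == y)].
have f_pair z : has_f (A01_pair x y z) = (z == x).
  by rewrite /A01_pair; case: (z == x); do ?case: ifP.
have zero_pair z : is_zero (A01_pair x y z) = false.
  by rewrite /A01_pair; do ?case: ifP.
have -> : A01_vanishes (A01_pair x y) w = precedes x y w.
  apply/idP/idP => [/A01_vanishesP[/hasP[z _]|[x' [y' []]]]|xy]; first by rewrite /= zero_pair.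
    by rewrite e_pair f_pair => /eqP-> /eqP->.
  by apply/A01_vanishesP; right; exists x, y; rewrite e_pair f_pair !eqxx.
by rewrite -!has_pred1 (eq_has e_pair) (eq_has f_pair).
Qed.

Lemma A01_satisfiesP (u v : word) :
  satisfies A0_1 u v <-> u =i v /\ (forall x y, precedes x y u = precedes x y v).
Proof.
split=> [sat|[mem_uv prec_uv] th].
  have A01_of_neq0 e f : A01_of e f <> A0 by case: e; case: f.
  split=> [x|x y].
    have nprec w : x \notin w -> precedes x x w = false.
      by move=> xNw; apply/negP => /precedes_mem; rewrite (negbTE xNw).
    have := sat (A01_pair x x); rewrite /= !evalw_A01_pair.
    case xu: (x \in u); case xv: (x \in v) => //.
      by rewrite (nprec v) ?xv //; case: ifP.
    by rewrite (nprec u) ?xu //; case: ifP.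
  have := sat (A01_pair x y); rewrite /= !evalw_A01_pair.
  case: (precedes x y u); case: (precedes x y v) => // E.
    by case: (A01_of_neq0 _ _ (esym E)).
  by case: (A01_of_neq0 _ _ E).
have vanishes s s' : s =i s' -> (forall x y, precedes x y s = precedes x y s') ->
    A01_vanishes th s -> A01_vanishes th s'.
  move=> mem_ss prec_ss /A01_vanishesP[zero|[x [y [fx ey xy]]]]; apply/A01_vanishesP.
    by left; rewrite -(eq_has_r mem_ss).
  by right; exists x, y; rewrite -prec_ss.
rewrite /= !evalw_A01 !(eq_has_r mem_uv).
suff -> : A01_vanishes th u = A01_vanishes th v by [].
by apply/idP/idP; apply: vanishes => // [z|x y]; rewrite ?mem_uv ?prec_uv.
Qed.

Definition wsubst (g : nat -> word) (w : word) : word := flatten (map g w).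

Lemma wsubst_cat g w w' : wsubst g (w ++ w') = wsubst g w ++ wsubst g w'.
Proof. by rewrite /wsubst map_cat flatten_cat. Qed.

Lemma count_wsubst (P : pred nat) g w : count P (wsubst g w) = \sum_(y <- w) count P (g y).
Proof. by rewrite count_flatten sumnE !big_map. Qed.

Lemma evalw_M_lambda W (th : nat -> option word) (w : word) :
  evalw (M := M_lambda W) th w =
  if all (fun y => th y) w then Some (wsubst (fun y => odflt [::] (th y)) w) else None.
Proof. by elim: w => [|a w /= ->] //; rewrite /wsubst /=; case: (th a); case: (all _ w). Qed.

Definition cap2 (n : nat) : nat := minn n 2.

Lemma cap2_count_eq (u v : word) :
  (forall x, simple_in x u = simple_in x v) -> (forall x, mult_in x u = mult_in x v) ->
  forall y, cap2 (count_mem y u) = cap2 (count_mem y v).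
Proof.
move=> simple_uv mult_uv y; move: (simple_uv y) (mult_uv y).
by rewrite /simple_in /mult_in /cap2; lia.
Qed.

Lemma cap2_count_mem (u v : word) :
  (forall y, cap2 (count_mem y u) = cap2 (count_mem y v)) -> u =i v.
Proof. by move=> cap_uv y; rewrite -!count_mem_gt0; have := cap_uv y; rewrite /cap2; lia. Qed.

Lemma cap2D a b : cap2 (a + b) = cap2 (cap2 a + cap2 b).
Proof. by rewrite /cap2; lia. Qed.

Lemma cap2_sum (F : nat -> nat) (u v : word) :
  (forall y, cap2 (count_mem y u) = cap2 (count_mem y v)) ->
  cap2 (\sum_(y <- u) F y) = cap2 (\sum_(y <- v) F y).
Proof.
move=> cap_uv.
have sum_undup s : \sum_(y <- s) F y = \sum_(y <- undup s) count_mem y s * F y.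
  rewrite -big_undup_iterop_count; apply: eq_bigr => y _.
  by rewrite Monoid.iteropE iter_addn_0 mulnC.
have cap2_mul a f : cap2 (a * f) = cap2 (cap2 a * f).
  by rewrite /cap2; nia.
have cap2_weights s (a : nat -> nat) :
    cap2 (\sum_(y <- s) a y * F y) = cap2 (\sum_(y <- s) cap2 (a y) * F y).
  elim: s => [|y s IHs]; rewrite ?big_nil // !big_cons.
  by rewrite cap2D [RHS]cap2D IHs cap2_mul.
rewrite !sum_undup cap2_weights [RHS]cap2_weights (perm_big _ (perm_undup (cap2_count_mem cap_uv))).
by congr cap2; apply: eq_bigr => y _; rewrite cap_uv.
Qed.

Lemma tau1_mem u v : tau1 u v -> u =i v.
Proof.
elim=> {u v} [//|u v _ uv|u v w _ uv _ vw|p a s] x; first by rewrite uv.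
  by rewrite uv vw.
by rewrite !mem_cat !in_cons; case: (x == a).
Qed.

Lemma tau1_head (d : nat) u v : tau1 u v -> head d u = head d v.
Proof. by elim=> {u v} // [u v w _ -> //|[]]. Qed.

Lemma tau1_pump (p : word) (a k j : nat) : tau1 (p ++ nseq k.+1 a) (p ++ nseq j.+1 a).
Proof.
suff from0 n : tau1 (p ++ nseq 1 a) (p ++ nseq n.+1 a).
  exact: tau1_trans (tau1_sym (from0 k)) (from0 j).
elim: n => [|n IHn]; first exact: tau1_refl.
exact: tau1_trans IHn (tau1_step p a (nseq n a)).
Qed.

Lemma lam_refl w : lam w w.
Proof. by split=> //; apply: tau1_refl. Qed.

Lemma lam_pump (p : word) (a k j : nat) :
  1 < count_mem a p + k.+1 -> 1 < count_mem a p + j.+1 ->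
  lam (p ++ nseq k.+1 a) (p ++ nseq j.+1 a).
Proof.
move=> kmult jmult.
have count_pump n x : count_mem x (p ++ nseq n a) = count_mem x p + (a == x) * n.
  by rewrite count_cat count_nseq.
have mult_pump x : mult_in x (p ++ nseq k.+1 a) = mult_in x (p ++ nseq j.+1 a).
  rewrite /mult_in !count_pump; case: (eqVneq a x) => [<-|_]; last by rewrite !mul0n.
  by rewrite !mul1n kmult jmult.
split=> [|//|x]; first exact: tau1_pump.
(* The letter after the first [x] lies in [p] or starts the block, unless [x = a] does not
   occur in [p]; then it is the second letter of the block, and [k, j > 0]. *)
rewrite /first_two_adj !index_cat; case: ifP => xp.
  rewrite !nth_cat; case: ltnP => // le_size.
  have -> : (index x p).+1 - size p = 0 by apply/eqP; rewrite subn_eq0 index_mem.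
  by rewrite !nth_nseq.
have x0 : count_mem x p = 0 by apply/count_memPn; rewrite xp.
rewrite /mult_in count_pump x0 add0n; case: (eqVneq a x) => [ax|]; last by rewrite mul0n.
subst a; rewrite x0 in jmult; clear mult_pump.
rewrite /= eqxx addn0 !nth_cat (ltnNge (size p).+1) leqnSn /= subSnn.
by case: k {kmult}; case: j jmult.
Qed.

Definition apta (p q : nat) : word := nseq p 0 ++ 1 :: nseq q 0.

Definition ata_prefix (w : word) : nat := count_mem 0 (take (index 1 w) w).

(* Up to [lam], the factors of [a t a^k] (with [a = 0], [t = 1]): these are the words
   whose class is nonzero in [M_lambda W_ata]. *)
Definition ata_factor (w : word) : bool :=
  all (fun z => z <= 1) w &&
  ((count_mem 1 w == 0) || (count_mem 1 w == 1) && (ata_prefix w <= 1)).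

Lemma binary_nseq (w : word) :
  all (fun z => z <= 1) w -> count_mem 1 w = 0 -> w = nseq (size w) 0.
Proof.
move=> /allP w01 /count_memPn w1; apply/all_pred1P/allP => z zw.
by case: z zw (w01 z zw) => [|[|]] // zw; rewrite zw in w1.
Qed.

Lemma binary_apta (w : word) :
  all (fun z => z <= 1) w -> count_mem 1 w = 1 -> exists p q, w = apta p q.
Proof.
move=> w01 w1; have w1' : 1 \in w by rewrite -count_mem_gt0 w1.
move: w01 w1; rewrite (take_index_cat w1') all_cat count_cat /= count_before_index.
set pre := take _ w; set post := drop _ w => /andP[pre01 post01] /eqP.
rewrite add0n add1n eqSS => /eqP post1.
exists (size pre), (size post).
by rewrite /apta -(binary_nseq pre01 (count_before_index 1 w)) -(binary_nseq post01 post1).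
Qed.

Lemma count_apta (x p q : nat) :
  count_mem x (apta p q) = (x == 0) * (p + q) + (x == 1).
Proof. by rewrite /apta count_cat /= !count_nseq; case: x => [|[|x]] //=; lia. Qed.

Lemma ata_prefix_apta p q : ata_prefix (apta p q) = p.
Proof.
rewrite /ata_prefix /apta index_cat mem_nseq andbF size_nseq /= addn0.
by rewrite take_size_cat ?size_nseq // count_nseq mul1n.
Qed.

Lemma ata_factor_apta p q : ata_factor (apta p q) = (p <= 1).
Proof.
rewrite /ata_factor !count_apta ata_prefix_apta /= all_cat /=.
by rewrite !all_nseq !orbT.
Qed.

Lemma not_in_ideal_ata_factor (w : word) : ata_factor w -> ~ in_ideal W_ata w.
Proof.
move=> /andP[w01 w1] ideal; apply: ideal; exists [:: 0; 1; 0]; split=> //.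
case/orP: w1 => [/eqP w1|/andP[/eqP w1]].
  exists [:: 0; 1], [:: 0].
  have -> : w ++ [:: 0] = nseq (size w).+1 0 by rewrite {1}(binary_nseq w01 w1) -addn1 nseqD.
  exact: (@lam_pump [:: 0; 1] 0 (size w) 0).
have [p [q ->]] := binary_apta w01 w1; rewrite ata_prefix_apta => p_le1.
exists (nseq (1 - p) 0), [:: 0].
have -> : nseq (1 - p) 0 ++ apta p q ++ [:: 0] = [:: 0; 1] ++ nseq q.+1 0.
  by rewrite -[q.+1]addn1 nseqD; case: p p_le1 => [|[|]] // _; rewrite /apta /= -catA.
exact: (@lam_pump [:: 0; 1] 0 q 0).
Qed.

Lemma in_ideal_not_ata_factor (w : word) : ~~ ata_factor w -> in_ideal W_ata w.
Proof.
move=> not_factor [_ [-> [p [s [tau_z mult_z adj_z]]]]].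
set z := p ++ w ++ s in tau_z mult_z adj_z.
have z01 : all (fun c => c <= 1) z.
  by apply/allP => c; rewrite (tau1_mem tau_z) !inE; case/or3P => /eqP ->.
have z1 : count_mem 1 z <= 1 by rewrite leqNgt -/(mult_in 1 z) mult_z.
have not_adj : first_two_adj 0 z = false by rewrite adj_z // -mult_z.
move: not_factor z01 z1; rewrite /ata_factor /z !all_cat !count_cat.
move=> + /and3P[p01 w01 _]; rewrite w01 /=.
case: (count_mem 1 w) (@binary_apta w w01) => [|[|n]] //= w_apta pre_gt1 p1; last by lia.
have [pp [q w_def]] := w_apta erefl; rewrite w_def ata_prefix_apta -ltnNge in pre_gt1.
have p_def : p = nseq (size p) 0.
  by apply: binary_nseq => //; move: p1; rewrite addnCA add1n ltnS leqn0 addn_eq0 => /andP[/eqP].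
move: not_adj; rewrite /z w_def p_def /apta !catA -nseqD.
by case: (size p + pp) (leq_trans pre_gt1 (leq_addl (size p) pp)) => [|[|]].
Qed.

Lemma M_ata_eqv_Some (a b : word) :
  Mlam_eqv W_ata (Some a) (Some b) <-> if ata_factor a then lam a b else ~~ ata_factor b.
Proof.
have ideal_factor w : in_ideal W_ata w -> ~~ ata_factor w.
  by move=> ideal; apply/negP => /not_in_ideal_ata_factor.
rewrite /Mlam_eqv; case: ifP => [a_factor|/negbT a_not_factor].
  split=> [[[a_ideal _]|[a' [b' [[<-] [[<-] [_ ab]]]]]] //|ab].
    by case: (not_in_ideal_ata_factor a_factor).
  by right; exists a, b; do !split=> //; apply: not_in_ideal_ata_factor.
split=> [[[_ /ideal_factor //]|[a' [b' [[<-] [_ [a_not_ideal _]]]]]]|b_not_factor].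
  by case: a_not_ideal; apply: in_ideal_not_ata_factor.
by left; split; apply: in_ideal_not_ata_factor.
Qed.

Lemma lam_ata_factor (w w' : word) : ata_factor w -> ata_factor w' ->
  cap2 (count_mem 0 w) = cap2 (count_mem 0 w') -> count_mem 1 w = count_mem 1 w' ->
  (count_mem 1 w = 1 -> ata_prefix w = ata_prefix w') -> lam w w'.
Proof.
move=> /andP[w01 /orP[/eqP w1|/andP[/eqP w1 p_le1]]] /andP[w'01 _] cap0 ww'1 ww'pre.
  have w'1 : count_mem 1 w' = 0 by rewrite -ww'1.
  rewrite (binary_nseq w01 w1) (binary_nseq w'01 w'1) !count_nseq !mul1n /cap2 in cap0 *.
  case: (size w) (size w') cap0 => [|[|n]] [|[|n']] //= _; try exact: lam_refl.
  exact: (@lam_pump [::] 0 n.+1 n'.+1).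
have w'1 : count_mem 1 w' = 1 by rewrite -ww'1.
have [p [q w_def]] := binary_apta w01 w1; have [p' [q' w'_def]] := binary_apta w'01 w'1.
move: cap0 p_le1 (ww'pre w1); rewrite w_def w'_def !ata_prefix_apta !count_apta /cap2 /=.
rewrite !mul1n !addn0 => cap0 p_le1 pp'; subst p'.
have [<-|neq_qq'] := eqVneq q q'; first exact: lam_refl.
have [k q_def] : exists k, q = k.+1 by exists q.-1; lia.
have [j q'_def] : exists j, q' = j.+1 by exists q'.-1; lia.
rewrite /apta q_def q'_def -(cat1s 1 (nseq k.+1 0)) -(cat1s 1 (nseq j.+1 0)) !catA.
by apply: lam_pump; rewrite count_cat count_nseq /=; lia.
Qed.

Lemma M_ata_eqv_apta c d c' d' : 1 < c + d ->
  Mlam_eqv W_ata (Some (apta c d)) (Some (apta c' d')) ->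
  (c == 0) = (c' == 0) /\ (c <= 1) = (c' <= 1).
Proof.
move=> cd /M_ata_eqv_Some; rewrite !ata_factor_apta.
case: leqP => [c_le1 [/tau1_head head_eq _ adj_eq]|c_gt1]; last by rewrite -ltnNge; split; lia.
have mult0 : mult_in 0 (apta c d) by rewrite /mult_in count_apta /= mul1n addn0.
move: (head_eq 2) (adj_eq 0 mult0).
by case: c c_le1 {cd mult0 head_eq adj_eq} => [|[|]] // _; case: c' => [|[|]].
Qed.

Definition mark (t x y : nat) : word :=
  if y == t then [:: 1] else if y == x then [:: 0] else [::].

Lemma wsubst_mark_notin t x (s : word) : t \notin s -> wsubst (mark t x) s = nseq (count_mem x s) 0.
Proof.
elim: s => [|a s IHs] //=; rewrite inE negb_or eq_sym => /andP[/negbTE a_t s_t].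
by rewrite /wsubst /mark /= a_t -/(wsubst _ _) IHs //; case: (a == x).
Qed.

Lemma wsubst_mark t x (w : word) : simple_in t w ->
  wsubst (mark t x) w =
  apta (count_mem x (take (index t w) w)) (count_mem x (drop (index t w).+1 w)).
Proof.
move=> t_simple; have tw := simple_in_mem t_simple.
have post_t : t \notin drop (index t w).+1 w.
  apply/count_memPn; move/eqP: t_simple.
  by rewrite {1}(take_index_cat tw) count_cat /= eqxx count_before_index add0n add1n => -[].
have pre_t : t \notin take (index t w) w by apply/count_memPn; apply: count_before_index.
rewrite {1}(take_index_cat tw) wsubst_cat /wsubst /= -!/(wsubst _ _) !wsubst_mark_notin //.
by rewrite /mark eqxx.
Qed.

Lemma M_ata_simple_mult_order (u v : word) : satisfies (M_lambda W_ata) u v ->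
  (forall x, simple_in x u = simple_in x v) ->
  forall t x, simple_in t u -> mult_in x u ->
    (first_occ t u < first_occ x u) = (first_occ t v < first_occ x v) /\
    (first_occ t u < second_occ x u) = (first_occ t v < second_occ x v).
Proof.
move=> sat simple_uv t x tu xu.
have tv : simple_in t v by rewrite -simple_uv.
have x_neq_t : x != t by apply: contraTneq xu => ->; rewrite /mult_in (eqP tu).
have count_split w : simple_in t w -> count_mem x w =
    count_mem x (take (index t w) w) + count_mem x (drop (index t w).+1 w).
  move=> /simple_in_mem tw; rewrite {1}(take_index_cat tw) count_cat /=.
  by rewrite eq_sym (negbTE x_neq_t).
have := sat (Some \o mark t x); rewrite !evalw_M_lambda !(introT allP) //= !wsubst_mark //.
move/M_ata_eqv_apta; rewrite -count_split // => /(_ xu)[before0 before1].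
by rewrite -!count_before_eq0 -?count_before_le1 ?simple_in_mem // before0 before1.
Qed.

Lemma ata_prefix_cat (a b c : word) : 1 \notin a -> 1 \in b ->
  ata_prefix (a ++ b ++ c) = count_mem 0 a + ata_prefix b.
Proof.
move=> /negbTE a1 b1; rewrite /ata_prefix !index_cat a1 b1.
by rewrite take_cat ltnNge leq_addr /= addKn count_cat take_cat index_mem b1.
Qed.

Lemma wsubst_one g t (w : word) : t \in w -> 1 \in g t -> count_mem 1 (wsubst g w) = 1 ->
  simple_in t w /\
  ata_prefix (wsubst g w) = count_mem 0 (wsubst g (take (index t w) w)) + ata_prefix (g t).
Proof.
move=> tw /[dup] gt1; rewrite -count_mem_gt0 => gt1_pos; have w_def := take_index_cat tw.
set pre := take _ w in w_def *; set post := drop _ w in w_def.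
have -> : wsubst g w = wsubst g pre ++ g t ++ wsubst g post by rewrite {1}w_def wsubst_cat.
rewrite !count_cat => one.
have /count_memPn pre1 : count_mem 1 (wsubst g pre) = 0.
  by move: one gt1_pos; lia.
have /count_memPn post1 : count_mem 1 (wsubst g post) = 0.
  by move: one gt1_pos; lia.
split; last exact: ata_prefix_cat.
have /count_memPn post_t : t \notin post.
  by apply: contra post1 => t_post; apply/flatten_mapP; exists t.
by rewrite /simple_in w_def count_cat /= eqxx count_before_index post_t.
Qed.

Section M_ata_sufficiency.

Variables u v : word.
Hypothesis simple_uv : forall x, simple_in x u = simple_in x v.
Hypothesis mult_uv : forall x, mult_in x u = mult_in x v.
Hypothesis simple_order : forall s t, simple_in s u -> simple_in t u ->
  (first_occ s u < first_occ t u) = (first_occ s v < first_occ t v).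
Hypothesis simple_mult_order : forall t x, simple_in t u -> mult_in x u ->
  (first_occ t u < first_occ x u) = (first_occ t v < first_occ x v) /\
  (first_occ t u < second_occ x u) = (first_occ t v < second_occ x v).

Let cap2_count := cap2_count_eq simple_uv mult_uv.
Let mem_uv := cap2_count_mem cap2_count.

Lemma cap2_count_before t : simple_in t u -> forall y,
  cap2 (count_mem y (take (index t u) u)) = cap2 (count_mem y (take (index t v) v)).
Proof.
move=> tu y; have tv : simple_in t v by rewrite -simple_uv.
have [->|y_neq_t] := eqVneq y t; first by rewrite !count_before_index.
have capE w : simple_in t w -> cap2 (count_mem y (take (index t w) w)) =
    ~~ (first_occ t w < first_occ y w) + ~~ (first_occ t w < second_occ y w).
  move=> /simple_in_mem tw; rewrite -count_before_eq0 // -count_before_le1 //.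
  by rewrite /cap2; case: (count_mem _ _) => [|[|n]].
case yu: (y \in u); last first.
  have count0 w : y \notin w -> count_mem y (take (index t w) w) = 0.
    by move=> yNw; apply/count_memPn; apply: contra yNw; apply: mem_take.
  by rewrite !count0 // -?mem_uv yu.
rewrite !capE //; have [ys|ym] := boolP (simple_in y u).
  have before_le1 w : simple_in t w -> simple_in y w -> first_occ t w < second_occ y w.
    move=> /simple_in_mem tw yw; rewrite -count_before_le1 // -(eqP yw).
    by rewrite -{3}(cat_take_drop (index t w) w) count_cat leq_addr.
  have yv : simple_in y v by rewrite -simple_uv.
  by rewrite simple_order // !before_le1.
have {}ym : mult_in y u by move: ym; rewrite simple_inE yu negbK.
by have [-> ->] := simple_mult_order tu ym.
Qed.

Lemma cap2_count_wsubst g z :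
  cap2 (count_mem z (wsubst g u)) = cap2 (count_mem z (wsubst g v)).
Proof. by rewrite !count_wsubst; apply: cap2_sum. Qed.

Lemma cap2_prefix_wsubst g : count_mem 1 (wsubst g u) = 1 ->
  cap2 (ata_prefix (wsubst g u)) = cap2 (ata_prefix (wsubst g v)).
Proof.
move=> one_u; have one_v : count_mem 1 (wsubst g v) = 1.
  by have := cap2_count_wsubst g 1; rewrite /cap2 one_u; lia.
have /flatten_mapP[t tu gt1] : 1 \in wsubst g u by rewrite -count_mem_gt0 one_u.
have tv : t \in v by rewrite -mem_uv.
have [t_simple ->] := wsubst_one tu gt1 one_u; have [_ ->] := wsubst_one tv gt1 one_v.
by rewrite cap2D [RHS]cap2D !count_wsubst (cap2_sum _ (cap2_count_before t_simple)).
Qed.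

Lemma ata_factor_wsubst g : ata_factor (wsubst g u) = ata_factor (wsubst g v).
Proof.
have cap1 := cap2_count_wsubst g 1; rewrite /ata_factor.
have mem_w : wsubst g u =i wsubst g v.
  by move=> z; rewrite -!count_mem_gt0; have := cap2_count_wsubst g z; rewrite /cap2; lia.
rewrite (eq_all_r mem_w); congr (_ && _).
have [one_u|not_one_u] := eqVneq (count_mem 1 (wsubst g u)) 1.
  have := cap2_prefix_wsubst one_u; move: cap1; rewrite one_u /cap2 => cap1 cap_pre.
  have -> : count_mem 1 (wsubst g v) = 1 by lia.
  by apply/idP/idP => ?; lia.
have not_one_v : count_mem 1 (wsubst g v) != 1 by move: cap1 not_one_u; rewrite /cap2; lia.
by rewrite (negbTE not_one_v) !andFb !orbF; apply/eqP/eqP; move: cap1; rewrite /cap2; lia.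
Qed.

Lemma lam_wsubst g : ata_factor (wsubst g u) -> lam (wsubst g u) (wsubst g v).
Proof.
move=> factor_u; have factor_v := factor_u; rewrite ata_factor_wsubst in factor_v.
have cap1 := cap2_count_wsubst g 1.
move: (factor_u) (factor_v) => /andP[_ one_u] /andP[_ one_v].
apply: lam_ata_factor => //; first exact: cap2_count_wsubst.
  by move: cap1 one_u one_v; rewrite /cap2; lia.
move=> one; have := cap2_prefix_wsubst one; move: one_u one_v; rewrite /cap2; lia.
Qed.

Lemma M_ata_satisfies : satisfies (M_lambda W_ata) u v.
Proof.
move=> th; rewrite !evalw_M_lambda -(eq_all_r mem_uv); case: all => /=; last by left.
apply/M_ata_eqv_Some; rewrite -ata_factor_wsubst.
by case: ifP => [/lam_wsubst|/negbT].
Qed.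

End M_ata_sufficiency.

Unset Implicit Arguments.
Set Strict Implicit.

Theorem lemma6p2 (u v : word) :
  join_satisfies A0_1 (M_lambda W_ata) u v <->
  [/\ (forall x, simple_in x u = simple_in x v) /\
      (forall x, mult_in x u = mult_in x v),
      (forall x y, x \in u -> y \in u ->
         (first_occ x u < last_occ y u) = (first_occ x v < last_occ y v)) &
      (forall t x, simple_in t u -> mult_in x u ->
         (first_occ t u < first_occ x u) = (first_occ t v < first_occ x v) /\
         (first_occ t u < second_occ x u) = (first_occ t v < second_occ x v))].
Proof.
split=> [[/A01_satisfiesP[mem_uv precedes_uv] sat_M]|[[simple_uv mult_uv] last_uv order_uv]].
  have mult_uv x : mult_in x u = mult_in x v by rewrite -!precedes_xx.
  have simple_uv x : simple_in x u = simple_in x v by rewrite !simple_inE mem_uv mult_uv.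
  split=> [//|x y _ _|]; first by rewrite -!precedesE.
  exact: M_ata_simple_mult_order.
have mem_uv := cap2_count_mem (cap2_count_eq simple_uv mult_uv).
split.
  apply/A01_satisfiesP; split=> // x y.
  have [/andP[xu yu]|xyNu] := boolP ((x \in u) && (y \in u)); first by rewrite !precedesE last_uv.
  have xyNv : ~~ ((x \in v) && (y \in v)) by rewrite -!mem_uv.
  by rewrite !(negbTE (contra (@precedes_mem x y _) _)).
apply: M_ata_satisfies => // s t su tu.
have [sv tv] : simple_in s v /\ simple_in t v by rewrite -!simple_uv.
rewrite -[first_occ t u](last_occ_simple tu) -[first_occ t v](last_occ_simple tv).
by rewrite last_uv ?simple_in_mem.
Qed.
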